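(* Let $\mathbb{C}$ be a regular category. The following are equivalent: (i) $\mathbb{C}$ is a majority category. (ii) For any three reflexive relations $A,B,C$ on any object $X$, $(A\circ B)\cap(A\circ C)\leqslant A\circ(B\cap C)$. (iii) For any three reflexive relations $A,B,C$ on any object $X$, $A\cap(B\circ C)\leqslant (A\cap B)\circ(A\cap C)$. (iv) For any equivalence relations $\alpha,\beta,\gamma$ on any object $X$, $\alpha\cap(\beta\circ\gamma)=(\alpha\cap\beta)\circ(\alpha\cap\gamma)$. (v) For any effective equivalence relations $\alpha,\beta,\gamma$ on any object $X$, $\alpha\cap(\beta\circ\gamma)=(\alpha\cap\beta)\circ(\alpha\cap\gamma)$.
   Context: A category is regular if it has finite limits and coequalizers of kernel pairs and regular epimorphisms are pullback-stable; morphisms factor as regular epi followed by mono (image factorization). Relations on $X$ are subobjects of $X\times X$; reflexive if the diagonal factors through them; $\cap$ is intersection of subobjects (pullback). For $x:S\to X$ and a subobject $A$ of $X$, $x\in_S A$ means $x$ factors through a representative of $A$. The composite $R\circ S$ of relations $R$ (represented by $(r_1,r_2):R_0\to X\times Y$) and $S$ (represented by $(s_1,s_2):S_0\to Y\times Z$) is the image of $(r_1p_1,s_2p_2):P\to X\times Z$ where $(P,p_1,p_2)$ is the pullback of $s_1$ along $r_2$. An equivalence relation is effective if it is the kernel pair of some morphism. A ternary relation $R\leqslant X\times Y\times Z$ is majority-selecting if for all $S$ and $x,x':S\to X$, $y,y':S\to Y$, $z,z':S\to Z$: $(x,y,z')\in_S R$, $(x,y',z)\in_S R$, $(x',y,z)\in_S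 R$ imply $(x,y,z)\in_S R$; $\mathbb{C}$ is a majority category if every ternary relation in it is majority-selecting. *)

(** * Categories (hom-types with Leibniz equality of morphisms) *)
Record Cat := {
  Ob :> Type;
  Hom : Ob -> Ob -> Type;
  idm : forall A, Hom A A;
  comp : forall A B C, Hom B C -> Hom A B -> Hom A C;
  comp_assoc : forall A B C D (h : Hom C D) (g : Hom B C) (f : Hom A B),
      comp A C D h (comp A B C g f) = comp A B D (comp B C D h g) f;
  comp_id_l : forall A B (f : Hom A B), comp A B B (idm B) f = f;
  comp_id_r : forall A B (f : Hom A B), comp A A B f (idm A) = f
}.

Arguments Hom {c} _ _.
Arguments idm {c} _.
Arguments comp {c A B C} _ _.

Notation "g ∘ f" := (comp g f) (at level 40, left associativity).

Section CatDefs.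
Variable C : Cat.

Definition is_terminal (T : C) : Prop :=
  forall X : C, exists f : Hom X T, forall g : Hom X T, g = f.

Definition is_pullback {A B D : C} (f : Hom A D) (g : Hom B D)
    (P : C) (p1 : Hom P A) (p2 : Hom P B) : Prop :=
  f ∘ p1 = g ∘ p2 /\
  forall (T : C) (u : Hom T A) (v : Hom T B), f ∘ u = g ∘ v ->
    exists w : Hom T P, (p1 ∘ w = u /\ p2 ∘ w = v) /\
      forall w' : Hom T P, p1 ∘ w' = u -> p2 ∘ w' = v -> w' = w.

Definition has_finite_limits : Prop :=
  (exists T : C, is_terminal T) /\
  forall (A B D : C) (f : Hom A D) (g : Hom B D),
    exists (P : C) (p1 : Hom P A) (p2 : Hom P B), is_pullback f g P p1 p2.

Definition is_coequalizer {A B Q : C} (f g : Hom A B) (q : Hom B Q) : Prop :=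
  q ∘ f = q ∘ g /\
  forall (Z : C) (h : Hom B Z), h ∘ f = h ∘ g ->
    exists u : Hom Q Z, u ∘ q = h /\ forall u' : Hom Q Z, u' ∘ q = h -> u' = u.

Definition regular_epi {B Q : C} (q : Hom B Q) : Prop :=
  exists (A : C) (f g : Hom A B), is_coequalizer f g q.

Definition regular : Prop :=
  has_finite_limits /\
  (forall (A B : C) (f : Hom A B) (P : C) (p1 p2 : Hom P A),
      is_pullback f f P p1 p2 -> exists (Q : C) (q : Hom A Q), is_coequalizer p1 p2 q) /\
  (forall (A B D : C) (e : Hom A D) (g : Hom B D) (P : C) (p1 : Hom P A) (p2 : Hom P B),
      regular_epi e -> is_pullback e g P p1 p2 -> regular_epi p2).

(** A relation from X to Y is a subobject of X × Y; a morphism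
    into X × Y is a pair of morphisms and it is a monomorphism iff the pair is
    jointly monic.  We represent a relation by such a representative. *)
Record Rel (X Y : C) : Type := {
  rob : C;
  rl : Hom rob X;
  rr : Hom rob Y;
  rjm : forall (T : C) (u v : Hom T rob), rl ∘ u = rl ∘ v -> rr ∘ u = rr ∘ v -> u = v
}.

Arguments rob {X Y} _.
Arguments rl {X Y} _.
Arguments rr {X Y} _.

Definition mem2 {X Y : C} (R : Rel X Y) {S : C} (x : Hom S X) (y : Hom S Y) : Prop :=
  exists t : Hom S (rob R), rl R ∘ t = x /\ rr R ∘ t = y.

Definition rle {X Y : C} (R R' : Rel X Y) : Prop :=
  exists t : Hom (rob R) (rob R'), rl R' ∘ t = rl R /\ rr R' ∘ t = rr R.

Definition req {X Y : C} (R R' : Rel X Y) : Prop := rle R R' /\ rle R' R.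

Definition reflexive {X : C} (R : Rel X X) : Prop :=
  exists d : Hom X (rob R), rl R ∘ d = idm X /\ rr R ∘ d = idm X.

Definition symmetric {X : C} (R : Rel X X) : Prop :=
  forall (S : C) (x y : Hom S X), mem2 R x y -> mem2 R y x.

Definition transitive {X : C} (R : Rel X X) : Prop :=
  forall (S : C) (x y z : Hom S X), mem2 R x y -> mem2 R y z -> mem2 R x z.

Definition equivalence {X : C} (R : Rel X X) : Prop :=
  reflexive R /\ symmetric R /\ transitive R.

Definition effective {X : C} (R : Rel X X) : Prop :=
  exists (Y : C) (f : Hom X Y), is_pullback f f (rob R) (rl R) (rr R).

Definition is_intersection {X Y : C} (A B I : Rel X Y) : Prop :=
  exists (iA : Hom (rob I) (rob A)) (iB : Hom (rob I) (rob B)),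
    (rl A ∘ iA = rl I /\ rr A ∘ iA = rr I /\ rl B ∘ iB = rl I /\ rr B ∘ iB = rr I) /\
    forall (T : C) (u : Hom T (rob A)) (v : Hom T (rob B)),
      rl A ∘ u = rl B ∘ v -> rr A ∘ u = rr B ∘ v ->
      exists w : Hom T (rob I), iA ∘ w = u /\ iB ∘ w = v.

(** [K] is the composite R ∘ S (R from X to Y, S from Y to Z): the image
    (regular epi / mono factorization) of (r1 p1, s2 p2) : P -> X × Z where
    (P, p1, p2) is the pullback of s1 along r2. *)
Definition is_composite {X Y Z : C} (R : Rel X Y) (S : Rel Y Z) (K : Rel X Z) : Prop :=
  exists (P : C) (p1 : Hom P (rob R)) (p2 : Hom P (rob S)),
    is_pullback (rr R) (rl S) P p1 p2 /\
    exists e : Hom P (rob K),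
      regular_epi e /\ rl K ∘ e = rl R ∘ p1 /\ rr K ∘ e = rr S ∘ p2.

Record Rel3 (X Y Z : C) := {
  r3ob : C;
  r3a : Hom r3ob X;
  r3b : Hom r3ob Y;
  r3c : Hom r3ob Z;
  r3jm : forall (T : C) (u v : Hom T r3ob),
      r3a ∘ u = r3a ∘ v -> r3b ∘ u = r3b ∘ v -> r3c ∘ u = r3c ∘ v -> u = v
}.

Arguments r3ob {X Y Z} _.
Arguments r3a {X Y Z} _.
Arguments r3b {X Y Z} _.
Arguments r3c {X Y Z} _.

Definition mem3 {X Y Z : C} (R : Rel3 X Y Z) {S : C}
    (x : Hom S X) (y : Hom S Y) (z : Hom S Z) : Prop :=
  exists t : Hom S (r3ob R), r3a R ∘ t = x /\ r3b R ∘ t = y /\ r3c R ∘ t = z.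

Definition majority_selecting {X Y Z : C} (R : Rel3 X Y Z) : Prop :=
  forall (S : C) (x x' : Hom S X) (y y' : Hom S Y) (z z' : Hom S Z),
    mem3 R x y z' -> mem3 R x y' z -> mem3 R x' y z -> mem3 R x y z.

Definition majority_category : Prop :=
  forall (X Y Z : C) (R : Rel3 X Y Z), majority_selecting R.

End CatDefs.



Arguments is_terminal {C} _.
Arguments is_pullback {C A B D} _ _ _ _ _.
Arguments is_coequalizer {C A B Q} _ _ _.
Arguments regular_epi {C B Q} _.
Arguments mem2 {C X Y} _ {S} _ _.
Arguments rle {C X Y} _ _.
Arguments req {C X Y} _ _.
Arguments reflexive {C X} _.
Arguments symmetric {C X} _.
Arguments transitive {C X} _.
Arguments equivalence {C X} _.
Arguments effective {C X} _.
Arguments is_intersection {C X Y} _ _ _.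
Arguments is_composite {C X Y Z} _ _ _.
Arguments mem3 {C X Y Z} _ {S} _ _ _.
Arguments majority_selecting {C X Y Z} _.

(* Work with generalized elements.  In a regular category membership in an
   intersection is conjunction, membership in a composite R ∘ S means that a
   middle element exists after passing to a regular-epi cover, and membership in
   any relation descends along regular epis.
   (i) ⇒ (ii), (iii): apply the majority property to the ternary relation
   {(x, y, z) | ∃ w, x A w, w B y, w D z}, resp. to
   {((x, x'), y, z) | ∃ w, x A w A x', y B w, w D z}.
   (v) ⇒ (i), (ii) ⇒ (i): for elements t1 = (x, y, z'), t2 = (x, y', z),
   t3 = (x', y, z) of a ternary relation R, the kernel pairs α, β, γ of the
   projections of R satisfy (t1, t2) ∈ α ∩ (β ∘ γ) and (t1, t2) ∈ (β ∘ γ) ∩ (β ∘ α);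
   the inclusions (v), resp. (ii) with A, B, D := β, γ, α, give locally an
   element of R with coordinates (x, y, z).
   (iii) ⇒ (iv): the reverse inclusion holds for any transitive α. *)


Arguments rob {C X Y} _.
Arguments rl {C X Y} _.
Arguments rr {C X Y} _.
Arguments rjm {C X Y} _ {T} _ _ _ _.
Arguments r3ob {C X Y Z} _.
Arguments r3a {C X Y Z} _.
Arguments r3b {C X Y Z} _.
Arguments r3c {C X Y Z} _.
Arguments r3jm {C X Y Z} _ {T} _ _ _ _ _.

Ltac assoc_r := repeat rewrite <- comp_assoc.
Ltac assoc_l := repeat rewrite comp_assoc.

Section RegularCategory.
Variable C : Cat.

Definition is_product {X Y P : C} (p1 : Hom P X) (p2 : Hom P Y) : Prop :=
  (forall S (f : Hom S X) (g : Hom S Y), exists h : Hom S P, p1 ∘ h = f /\ p2 ∘ h = g) /\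
  (forall S (h h' : Hom S P), p1 ∘ h = p1 ∘ h' -> p2 ∘ h = p2 ∘ h' -> h = h').

Lemma regular_epi_epi {B Q : C} (q : Hom B Q) : regular_epi q ->
  forall Z (u v : Hom Q Z), u ∘ q = v ∘ q -> u = v.
Proof.
  intros [A [f [g [Hqfg Huniv]]]] Z u v E.
  destruct (Huniv Z (u ∘ q)) as [w [_ Hw]].
  { assoc_r. rewrite Hqfg. reflexivity. }
  rewrite (Hw u eq_refl), (Hw v (eq_sym E)). reflexivity.
Qed.

Lemma pullback_lift {A B D P : C} {f : Hom A D} {g : Hom B D} {p1 : Hom P A} {p2 : Hom P B} :
  is_pullback f g P p1 p2 -> forall T (u : Hom T A) (v : Hom T B), f ∘ u = g ∘ v ->
  exists w : Hom T P, p1 ∘ w = u /\ p2 ∘ w = v.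
Proof. intros [_ H] T u v E. destruct (H T u v E) as [w [Hw _]]. eauto. Qed.

Lemma pullback_jointly_monic {A B D P : C} {f : Hom A D} {g : Hom B D}
    {p1 : Hom P A} {p2 : Hom P B} :
  is_pullback f g P p1 p2 ->
  forall T (w w' : Hom T P), p1 ∘ w = p1 ∘ w' -> p2 ∘ w = p2 ∘ w' -> w = w'.
Proof.
  intros [Hsq H] T w w' E1 E2.
  destruct (H T (p1 ∘ w') (p2 ∘ w')) as [z [_ Hz]].
  { assoc_l. rewrite Hsq. reflexivity. }
  rewrite (Hz w E1 E2), (Hz w' eq_refl eq_refl). reflexivity.
Qed.


Lemma mem2_precomp {X Y S T : C} (R : Rel C X Y) (x : Hom S X) (y : Hom S Y) (h : Hom T S) :
  mem2 R x y -> mem2 R (x ∘ h) (y ∘ h).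
Proof. intros [t [E1 E2]]. exists (t ∘ h). assoc_l. rewrite E1, E2. auto. Qed.

Lemma rle_of_mem2 {X Y : C} (R R' : Rel C X Y) :
  (forall S (x : Hom S X) (y : Hom S Y), mem2 R x y -> mem2 R' x y) -> rle R R'.
Proof.
  intros H. destruct (H _ (rl R) (rr R)) as [t [E1 E2]].
  { exists (idm _). rewrite !comp_id_r. auto. }
  exists t. auto.
Qed.

Lemma mem2_rle {X Y : C} (R R' : Rel C X Y) : rle R R' ->
  forall S (x : Hom S X) (y : Hom S Y), mem2 R x y -> mem2 R' x y.
Proof.
  intros [t [E1 E2]] S x y [u [F1 F2]]. exists (t ∘ u). assoc_l. rewrite E1, E2. auto.
Qed.

Lemma mem2_refl {X : C} (R : Rel C X X) : reflexive R ->
  forall S (x : Hom S X), mem2 R x x.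
Proof.
  intros [d [D1 D2]] S x. exists (d ∘ x). assoc_l. rewrite D1, D2, comp_id_l. auto.
Qed.

Lemma mem2_descend {X Y S S' : C} (R : Rel C X Y) (c : Hom S' S) (x : Hom S X) (y : Hom S Y) :
  regular_epi c -> mem2 R (x ∘ c) (y ∘ c) -> mem2 R x y.
Proof.
  intros Hc [t [E1 E2]].
  pose proof (regular_epi_epi c Hc) as Epi.
  destruct Hc as [A [f [g [Hcfg Huniv]]]].
  destruct (Huniv _ t) as [u [Hut _]].
  { apply (rjm R); assoc_l; rewrite ?E1, ?E2; assoc_r; rewrite Hcfg; reflexivity. }
  exists u. split; apply Epi; assoc_r; rewrite Hut; auto.
Qed.

Lemma mem3_descend {X Y Z S S' : C} (R : Rel3 C X Y Z) (c : Hom S' S)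
    (x : Hom S X) (y : Hom S Y) (z : Hom S Z) :
  regular_epi c -> mem3 R (x ∘ c) (y ∘ c) (z ∘ c) -> mem3 R x y z.
Proof.
  intros Hc [t [E1 [E2 E3]]].
  pose proof (regular_epi_epi c Hc) as Epi.
  destruct Hc as [A [f [g [Hcfg Huniv]]]].
  destruct (Huniv _ t) as [u [Hut _]].
  { apply (r3jm R); assoc_l; rewrite ?E1, ?E2, ?E3; assoc_r; rewrite Hcfg; reflexivity. }
  exists u. split; [|split]; apply Epi; assoc_r; rewrite Hut; auto.
Qed.

Definition rel_conv {X Y : C} (R : Rel C X Y) : Rel C Y X :=
  {| rob := rob R; rl := rr R; rr := rl R;
     rjm := fun T u v Er El => rjm R u v El Er |}.

Lemma mem2_conv {X Y S : C} (R : Rel C X Y) (x : Hom S X) (y : Hom S Y) :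
  mem2 (rel_conv R) y x <-> mem2 R x y.
Proof. split; intros [t [E1 E2]]; exists t; auto. Qed.

Lemma mem2_composite_intro {X Y Z : C} (R : Rel C X Y) (R' : Rel C Y Z) (K : Rel C X Z) :
  is_composite R R' K -> forall S (x : Hom S X) (y : Hom S Y) (z : Hom S Z),
  mem2 R x y -> mem2 R' y z -> mem2 K x z.
Proof.
  intros [P [p1 [p2 [Hp [e [Re [E1 E2]]]]]]] S x y z [a [A1 A2]] [b [B1 B2]].
  destruct (pullback_lift Hp _ a b) as [w [W1 W2]]. { rewrite A2, B1. auto. }
  exists (e ∘ w). assoc_l. rewrite E1, E2. assoc_r. rewrite W1, W2. auto.
Qed.

Lemma mem2_intersection {X Y : C} (A B I : Rel C X Y) : is_intersection A B I ->
  forall S (x : Hom S X) (y : Hom S Y), mem2 I x y <-> mem2 A x y /\ mem2 B x y.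
Proof.
  intros [iA [iB [[H1 [H2 [H3 H4]]] Huniv]]] S x y. split.
  - intros [t [T1 T2]].
    split; [exists (iA ∘ t) | exists (iB ∘ t)]; assoc_l; rewrite ?H1, ?H2, ?H3, ?H4; auto.
  - intros [[a [A1 A2]] [b [B1 B2]]].
    destruct (Huniv _ a b) as [w [W1 W2]]. { rewrite A1, B1; auto. } { rewrite A2, B2; auto. }
    exists w. rewrite <- H1, <- H2. assoc_r. rewrite W1. auto.
Qed.

Hypothesis HC : regular C.

Lemma exists_pullback {A B D : C} (f : Hom A D) (g : Hom B D) :
  exists (P : C) (p1 : Hom P A) (p2 : Hom P B), is_pullback f g P p1 p2.
Proof. destruct HC as [[_ H] _]. apply H. Qed.

Lemma exists_pullback_regular_epi {A B D : C} (e : Hom A D) (g : Hom B D) :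
  regular_epi e -> exists (P : C) (p1 : Hom P A) (p2 : Hom P B),
    is_pullback e g P p1 p2 /\ regular_epi p2.
Proof.
  intros He. destruct (exists_pullback e g) as [P [p1 [p2 Hp]]].
  exists P, p1, p2. split; [exact Hp|]. destruct HC as [_ [_ H]]. eapply H; eauto.
Qed.

Lemma exists_product (X Y : C) :
  exists (P : C) (p1 : Hom P X) (p2 : Hom P Y), is_product p1 p2.
Proof.
  destruct HC as [[[T HT] Hpb] _].
  destruct (HT X) as [tX _]. destruct (HT Y) as [tY _].
  destruct (Hpb _ _ _ tX tY) as [P [p1 [p2 Hp]]].
  exists P, p1, p2. split.
  - intros S f g. apply (pullback_lift Hp).
    destruct (HT S) as [tS HS]. rewrite (HS (tX ∘ f)), (HS (tY ∘ g)). reflexivity.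
  - intros S h h'. apply (pullback_jointly_monic Hp).
Qed.

(* The image is the coequalizer of the kernel pair of f. To see that the induced
   m is monic, its kernel pair is covered by a regular epi on which both
   projections become equal, because there they factor through the kernel pair of f. *)
Lemma image_factorization {P W : C} (f : Hom P W) :
  exists (Q : C) (q : Hom P Q) (m : Hom Q W), regular_epi q /\ m ∘ q = f /\
    forall T (u v : Hom T Q), m ∘ u = m ∘ v -> u = v.
Proof.
  destruct (exists_pullback f f) as [K [k1 [k2 Hk]]].
  destruct HC as [_ [Hcoeq _]].
  destruct (Hcoeq _ _ _ _ _ _ Hk) as [Q [q Hq]].
  assert (Rq : regular_epi q) by (exists K, k1, k2; exact Hq).
  destruct Hq as [Hqk Hquniv].
  destruct (Hquniv _ f (proj1 Hk)) as [m [Hm _]].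
  exists Q, q, m. split; [exact Rq|]. split; [exact Hm|].
  destruct (exists_pullback m m) as [L [l1 [l2 Hl]]].
  destruct (exists_pullback_regular_epi q l1 Rq) as [P1 [a1 [b1 [H1 R1]]]].
  destruct (exists_pullback_regular_epi q (l2 ∘ b1) Rq) as [P2 [a2 [b2 [H2 R2]]]].
  assert (Ef : f ∘ (a1 ∘ b2) = f ∘ a2).
  { rewrite <- Hm. assoc_r. rewrite (comp_assoc _ _ _ _ _ q a1 b2), (proj1 H1). assoc_l.
    rewrite (proj1 Hl). assoc_r. rewrite (proj1 H2). assoc_l. reflexivity. }
  destruct (pullback_lift Hk _ _ _ Ef) as [k [Ek1 Ek2]].
  assert (Ecover : l1 ∘ (b1 ∘ b2) = l2 ∘ (b1 ∘ b2)).
  { assoc_l. rewrite <- (proj1 H1), <- (proj1 H2). assoc_r. rewrite <- Ek1, <- Ek2.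
    assoc_l. rewrite Hqk. reflexivity. }
  assert (El : l1 = l2).
  { apply (regular_epi_epi b1 R1). apply (regular_epi_epi b2 R2). assoc_r. exact Ecover. }
  intros T u v Huv.
  destruct (pullback_lift Hl _ _ _ Huv) as [w [Hw1 Hw2]].
  rewrite <- Hw1, <- Hw2, El. reflexivity.
Qed.

Lemma exists_image_rel {P X Y : C} (f : Hom P X) (g : Hom P Y) :
  exists (R : Rel C X Y) (e : Hom P (rob R)), regular_epi e /\ rl R ∘ e = f /\ rr R ∘ e = g.
Proof.
  destruct (exists_product X Y) as [W [p1 [p2 [Hpair Hmono]]]].
  destruct (Hpair _ f g) as [h [Hh1 Hh2]].
  destruct (image_factorization h) as [Q [q [m [Rq [Hm Mono]]]]].
  unshelve eexists (Build_Rel C X Y Q (p1 ∘ m) (p2 ∘ m) _).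
  { intros T u v E1 E2. apply Mono. apply Hmono; assoc_l; assumption. }
  exists q. simpl. split; [exact Rq|]. split; assoc_r; rewrite Hm; assumption.
Qed.

Lemma mem2_composite_elim {X Y Z : C} (R : Rel C X Y) (R' : Rel C Y Z) (K : Rel C X Z) :
  is_composite R R' K -> forall S (x : Hom S X) (z : Hom S Z), mem2 K x z ->
  exists S' (c : Hom S' S) (y : Hom S' Y),
    regular_epi c /\ mem2 R (x ∘ c) y /\ mem2 R' y (z ∘ c).
Proof.
  intros [P [p1 [p2 [Hp [e [Re [E1 E2]]]]]]] S x z [t [Et1 Et2]].
  destruct (exists_pullback_regular_epi e t Re) as [S' [p [c [Hpc Rc]]]].
  exists S', c, (rr R ∘ (p1 ∘ p)). split; [exact Rc|]. split.
  - exists (p1 ∘ p). split; auto.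
    rewrite <- Et1. assoc_r. rewrite <- (proj1 Hpc). assoc_l. rewrite E1. reflexivity.
  - exists (p2 ∘ p). split.
    + assoc_l. rewrite <- (proj1 Hp). reflexivity.
    + rewrite <- Et2. assoc_r. rewrite <- (proj1 Hpc). assoc_l. rewrite E2. reflexivity.
Qed.

Lemma exists_composite {X Y Z : C} (R : Rel C X Y) (R' : Rel C Y Z) :
  exists K, is_composite R R' K.
Proof.
  destruct (exists_pullback (rr R) (rl R')) as [P [p1 [p2 Hp]]].
  destruct (exists_image_rel (rl R ∘ p1) (rr R' ∘ p2)) as [K [e [Re [E1 E2]]]].
  exists K, P, p1, p2. split; [exact Hp|]. exists e. auto.
Qed.

Lemma exists_intersection {X Y : C} (A B : Rel C X Y) : exists I, is_intersection A B I.
Proof.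
  destruct (exists_product X Y) as [W [p1 [p2 [Hpair Hmono]]]].
  destruct (Hpair _ (rl A) (rr A)) as [a [Ha1 Ha2]].
  destruct (Hpair _ (rl B) (rr B)) as [b [Hb1 Hb2]].
  destruct (exists_pullback a b) as [P [iA [iB Hp]]].
  assert (L1 : rl B ∘ iB = rl A ∘ iA).
  { rewrite <- Ha1, <- Hb1. assoc_r. rewrite (proj1 Hp). auto. }
  assert (L2 : rr B ∘ iB = rr A ∘ iA).
  { rewrite <- Ha2, <- Hb2. assoc_r. rewrite (proj1 Hp). auto. }
  unshelve eexists (Build_Rel C X Y P (rl A ∘ iA) (rr A ∘ iA) _).
  { intros T u v E1 E2. apply (pullback_jointly_monic Hp).
    - apply (rjm A); assoc_l; assumption.
    - apply (rjm B); assoc_l; rewrite ?L1, ?L2; assumption. }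
  exists iA, iB. simpl. split; [auto|].
  intros T u v U1 U2.
  destruct (pullback_lift Hp _ u v) as [w [W1 W2]].
  { apply Hmono; assoc_l; rewrite ?Ha1, ?Ha2, ?Hb1, ?Hb2; assumption. }
  eauto.
Qed.

Lemma composite_inter_le_inter_composite {X : C} (a b g ab ag ab_ag bg a_bg : Rel C X X) :
  transitive a -> is_intersection a b ab -> is_intersection a g ag ->
  is_composite ab ag ab_ag -> is_composite b g bg -> is_intersection a bg a_bg ->
  rle ab_ag a_bg.
Proof.
  intros Ta Hab Hag Hab_ag Hbg Ha_bg.
  apply rle_of_mem2. intros S x z M.
  destruct (mem2_composite_elim _ _ _ Hab_ag _ _ _ M) as [S' [c [y [Rc [Mxy Myz]]]]].
  apply (proj1 (mem2_intersection _ _ _ Hab _ _ _)) in Mxy as [ Axy Bxy].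
  apply (proj1 (mem2_intersection _ _ _ Hag _ _ _)) in Myz as [Ayz Gyz].
  apply (mem2_descend _ c _ _ Rc), (mem2_intersection _ _ _ Ha_bg). split.
  - exact (Ta _ _ _ _ Axy Ayz).
  - exact (mem2_composite_intro _ _ _ Hbg _ _ _ _ Bxy Gyz).
Qed.

Lemma exists_kernel_pair_rel {X Y : C} (f : Hom X Y) :
  exists K : Rel C X X, effective K /\ equivalence K /\
    forall S (u v : Hom S X), mem2 K u v <-> f ∘ u = f ∘ v.
Proof.
  destruct (exists_pullback f f) as [P [p1 [p2 Hp]]].
  set (K := Build_Rel C X X P p1 p2 (pullback_jointly_monic Hp)).
  assert (MK : forall S (u v : Hom S X), mem2 K u v <-> f ∘ u = f ∘ v).
  { intros S u v. split.
    - intros [t [T1 T2]]. simpl in *. rewrite <- T1, <- T2. assoc_l. rewrite (proj1 Hp). auto.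
    - intros E. destruct (pullback_lift Hp _ _ _ E) as [w [W1 W2]]. exists w. auto. }
  exists K. split; [exists Y, f; exact Hp|]. split; [|exact MK].
  split; [|split].
  - destruct (proj2 (MK _ (idm X) (idm X)) eq_refl) as [d Hd]. exists d. exact Hd.
  - intros S x y H. apply MK. apply MK in H. auto.
  - intros S x y z H1 H2. apply MK. apply MK in H1. apply MK in H2. congruence.
Qed.


Lemma exists_pairing_rel {W Y Z P : C} (p1 : Hom P Y) (p2 : Hom P Z)
    (F : Rel C W Y) (G : Rel C W Z) :
  is_product p1 p2 -> exists Q : Rel C W P, forall S (w : Hom S W) (q : Hom S P),
    mem2 Q w q <-> mem2 F w (p1 ∘ q) /\ mem2 G w (p2 ∘ q).
Proof.
  intros [Hpair Hmono].
  destruct (exists_pullback (rl F) (rl G)) as [V [v1 [v2 Hv]]].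
  destruct (Hpair _ (rr F ∘ v1) (rr G ∘ v2)) as [h [Hh1 Hh2]].
  assert (Hjm : forall T (u u' : Hom T V), (rl F ∘ v1) ∘ u = (rl F ∘ v1) ∘ u' ->
                  h ∘ u = h ∘ u' -> u = u').
  { intros T u u' El Eh.
    assert (Ev1 : v1 ∘ u = v1 ∘ u').
    { apply (rjm F); assoc_l; [exact El|]. rewrite <- Hh1. assoc_r. rewrite Eh. reflexivity. }
    apply (pullback_jointly_monic Hv); [exact Ev1|].
    apply (rjm G); assoc_l.
    - rewrite <- (proj1 Hv). assoc_r. rewrite Ev1. reflexivity.
    - rewrite <- Hh2. assoc_r. rewrite Eh. reflexivity. }
  exists (Build_Rel C W P V (rl F ∘ v1) h Hjm).
  intros S w q. unfold mem2. simpl. split.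
  - intros [t [T1 T2]]. split.
    + exists (v1 ∘ t). split; [assoc_l; exact T1|]. rewrite <- T2. assoc_l. rewrite Hh1. reflexivity.
    + exists (v2 ∘ t). split.
      * rewrite <- T1. assoc_l. rewrite (proj1 Hv). reflexivity.
      * rewrite <- T2. assoc_l. rewrite Hh2. reflexivity.
  - intros [[a [A1 A2]] [b [B1 B2]]].
    destruct (pullback_lift Hv _ a b) as [s [S1 S2]]; [congruence|].
    exists s. split; [assoc_r; rewrite S1; exact A1|].
    apply Hmono; assoc_l; rewrite ?Hh1, ?Hh2; assoc_r; rewrite ?S1, ?S2; assumption.
Qed.

Lemma exists_rel3_of_rel {X Y Z P : C} (p1 : Hom P Y) (p2 : Hom P Z) (K : Rel C X P) :
  is_product p1 p2 -> exists R : Rel3 C X Y Z, forall S (x : Hom S X) (q : Hom S P),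
    mem3 R x (p1 ∘ q) (p2 ∘ q) <-> mem2 K x q.
Proof.
  intros [_ Hmono].
  unshelve eexists (Build_Rel3 C X Y Z (rob K) (rl K) (p1 ∘ rr K) (p2 ∘ rr K) _).
  { intros T u v Ea Eb Ec. apply (rjm K u v Ea). apply Hmono; assoc_l; assumption. }
  intros S x q. unfold mem3, mem2. simpl. split.
  - intros [t [T1 [T2 T3]]]. exists t. split; [exact T1|]. apply Hmono; assoc_l; assumption.
  - intros [t [T1 T2]]. exists t. split; [exact T1|]. split; assoc_r; rewrite T2; reflexivity.
Qed.

Lemma exists_star_rel3 {U W Y Z : C} (E : Rel C U W) (F : Rel C W Y) (G : Rel C W Z) :
  exists R : Rel3 C U Y Z,
    (forall S (u : Hom S U) (w : Hom S W) (y : Hom S Y) (z : Hom S Z),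
       mem2 E u w -> mem2 F w y -> mem2 G w z -> mem3 R u y z) /\
    (forall S (u : Hom S U) (y : Hom S Y) (z : Hom S Z), mem3 R u y z ->
       exists S' (c : Hom S' S) (w : Hom S' W), regular_epi c /\
         mem2 E (u ∘ c) w /\ mem2 F w (y ∘ c) /\ mem2 G w (z ∘ c)).
Proof.
  destruct (exists_product Y Z) as [P [p1 [p2 HP]]].
  destruct (exists_pairing_rel p1 p2 F G HP) as [Q MQ].
  destruct (exists_composite E Q) as [K HK].
  destruct (exists_rel3_of_rel p1 p2 K HP) as [R MR].
  exists R. split.
  - intros S u w y z Euw Fwy Gwz.
    destruct (proj1 HP _ y z) as [q [Q1 Q2]]. subst y z.
    apply MR, (mem2_composite_intro _ _ _ HK _ _ w); [exact Euw|].
    apply MQ. auto.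
  - intros S u y z M.
    destruct (proj1 HP _ y z) as [q [Q1 Q2]]. subst y z.
    apply MR in M.
    destruct (mem2_composite_elim _ _ _ HK _ _ _ M) as [S' [c [w [Rc [Euw Qwq]]]]].
    apply MQ in Qwq as [Fw Gw].
    exists S', c, w. rewrite <- !comp_assoc. auto.
Qed.


Definition comp_inter_distributive : Prop :=
  forall (X : C) (A B D : Rel C X X),
    reflexive A -> reflexive B -> reflexive D ->
    forall AB AD BD AB_AD A_BD : Rel C X X,
      is_composite A B AB -> is_composite A D AD ->
      is_intersection AB AD AB_AD ->
      is_intersection B D BD -> is_composite A BD A_BD ->
      rle AB_AD A_BD.

Definition inter_comp_distributive : Prop :=
  forall (X : C) (A B D : Rel C X X),
    reflexive A -> reflexive B -> reflexive D ->
    forall BD A_BD AB AD AB_AD : Rel C X X,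
      is_composite B D BD -> is_intersection A BD A_BD ->
      is_intersection A B AB -> is_intersection A D AD ->
      is_composite AB AD AB_AD ->
      rle A_BD AB_AD.

Definition equiv_inter_comp_distributive : Prop :=
  forall (X : C) (a b g : Rel C X X),
    equivalence a -> equivalence b -> equivalence g ->
    forall bg a_bg ab ag ab_ag : Rel C X X,
      is_composite b g bg -> is_intersection a bg a_bg ->
      is_intersection a b ab -> is_intersection a g ag ->
      is_composite ab ag ab_ag ->
      req a_bg ab_ag.

Definition effective_inter_comp_distributive : Prop :=
  forall (X : C) (a b g : Rel C X X),
    equivalence a -> equivalence b -> equivalence g ->
    effective a -> effective b -> effective g ->
    forall bg a_bg ab ag ab_ag : Rel C X X,
      is_composite b g bg -> is_intersection a bg a_bg ->
      is_intersection a b ab -> is_intersection a g ag ->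
      is_composite ab ag ab_ag ->
      req a_bg ab_ag.

Lemma majority_category_of_local_witnesses :
  (forall (X Y Z : C) (R : Rel3 C X Y Z) (S : C) (t1 t2 t3 : Hom S (r3ob R)),
     r3a R ∘ t1 = r3a R ∘ t2 -> r3b R ∘ t1 = r3b R ∘ t3 -> r3c R ∘ t3 = r3c R ∘ t2 ->
     exists S' (c : Hom S' S) (r : Hom S' (r3ob R)), regular_epi c /\
       r3a R ∘ r = r3a R ∘ (t1 ∘ c) /\ r3b R ∘ r = r3b R ∘ (t1 ∘ c) /\
       r3c R ∘ r = r3c R ∘ (t2 ∘ c)) ->
  majority_category C.
Proof.
  intros H X Y Z R S x x' y y' z z' [t1 [A1 [B1 C1]]] [t2 [A2 [B2 C2]]] [t3 [A3 [B3 C3]]].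
  destruct (H X Y Z R S t1 t2 t3) as [S' [c [r [Rc [Ea [Eb Ec]]]]]]; [congruence..|].
  apply (mem3_descend R c _ _ _ Rc). exists r.
  rewrite Ea, Eb, Ec. assoc_l. rewrite A1, B1, C2. auto.
Qed.

Lemma majority_of_comp_inter_distributive :
  comp_inter_distributive -> majority_category C.
Proof.
  intros H. apply majority_category_of_local_witnesses.
  intros X Y Z R S t1 t2 t3 Ea Eb Ec.
  destruct (exists_kernel_pair_rel (r3a R)) as [al [_ [Qal Mal]]].
  destruct (exists_kernel_pair_rel (r3b R)) as [be [_ [Qbe Mbe]]].
  destruct (exists_kernel_pair_rel (r3c R)) as [ga [_ [Qga Mga]]].
  destruct (exists_composite be ga) as [AB HAB].
  destruct (exists_composite be al) as [AD HAD].
  destruct (exists_intersection AB AD) as [AB_AD HAB_AD].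
  destruct (exists_intersection ga al) as [BD HBD].
  destruct (exists_composite be BD) as [A_BD HA_BD].
  pose proof (H _ be ga al (proj1 Qbe) (proj1 Qga) (proj1 Qal) AB AD BD AB_AD A_BD
                HAB HAD HAB_AD HBD HA_BD) as Hle.
  assert (M : mem2 AB_AD t1 t2).
  { apply (mem2_intersection _ _ _ HAB_AD). split.
    - apply (mem2_composite_intro _ _ _ HAB _ _ t3); [apply Mbe | apply Mga]; assumption.
    - apply (mem2_composite_intro _ _ _ HAD _ _ t1); [apply Mbe | apply Mal]; auto. }
  apply (mem2_rle _ _ Hle) in M.
  destruct (mem2_composite_elim _ _ _ HA_BD _ _ _ M) as [S' [c [r [Rc [Mbr Mr]]]]].
  apply (mem2_intersection _ _ _ HBD) in Mr as [Mgr Mar].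
  apply Mbe in Mbr. apply Mga in Mgr. apply Mal in Mar.
  exists S', c, r. repeat split; auto.
  rewrite Mar. assoc_l. rewrite Ea. reflexivity.
Qed.

Lemma majority_of_effective_inter_comp_distributive :
  effective_inter_comp_distributive -> majority_category C.
Proof.
  intros H. apply majority_category_of_local_witnesses.
  intros X Y Z R S t1 t2 t3 Ea Eb Ec.
  destruct (exists_kernel_pair_rel (r3a R)) as [al [Eal [Qal Mal]]].
  destruct (exists_kernel_pair_rel (r3b R)) as [be [Ebe [Qbe Mbe]]].
  destruct (exists_kernel_pair_rel (r3c R)) as [ga [Ega [Qga Mga]]].
  destruct (exists_composite be ga) as [bg Hbg].
  destruct (exists_intersection al bg) as [a_bg Ha_bg].
  destruct (exists_intersection al be) as [ab Hab].
  destruct (exists_intersection al ga) as [ag Hag].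
  destruct (exists_composite ab ag) as [ab_ag Hab_ag].
  destruct (H _ al be ga Qal Qbe Qga Eal Ebe Ega bg a_bg ab ag ab_ag Hbg Ha_bg Hab Hag Hab_ag)
    as [Hle _].
  assert (M : mem2 a_bg t1 t2).
  { apply (mem2_intersection _ _ _ Ha_bg). split; [apply Mal; exact Ea|].
    apply (mem2_composite_intro _ _ _ Hbg _ _ t3); [apply Mbe | apply Mga]; assumption. }
  apply (mem2_rle _ _ Hle) in M.
  destruct (mem2_composite_elim _ _ _ Hab_ag _ _ _ M) as [S' [c [r [Rc [Mr1 Mr2]]]]].
  apply (mem2_intersection _ _ _ Hab) in Mr1 as [Mar Mbr].
  apply (mem2_intersection _ _ _ Hag) in Mr2 as [_ Mgr].
  apply Mal in Mar. apply Mbe in Mbr. apply Mga in Mgr.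
  exists S', c, r. auto.
Qed.

Lemma comp_inter_distributive_of_majority :
  majority_category C -> comp_inter_distributive.
Proof.
  intros Hmaj X A B D rA rB rD AB AD BD AB_AD A_BD HAB HAD HI HBD HA_BD.
  destruct (exists_star_rel3 A B D) as [R [Rintro Relim]].
  apply rle_of_mem2. intros S x z M.
  apply (mem2_intersection _ _ _ HI) in M as [Mab Mad].
  destruct (mem2_composite_elim _ _ _ HAB _ _ _ Mab) as [S1 [c1 [y1 [R1 [Axy1 By1z]]]]].
  destruct (mem2_composite_elim _ _ _ HAD _ _ _ Mad) as [S2 [c2 [y2 [R2 [Axy2 Dy2z]]]]].
  destruct (exists_pullback_regular_epi c2 c1 R2) as [P [p1 [p2 [Hp Rp]]]].
  apply (mem2_descend _ c1 _ _ R1), (mem2_descend _ p2 _ _ Rp).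
  set (x0 := (x ∘ c1) ∘ p2). set (z0 := (z ∘ c1) ∘ p2).
  assert (Ex : (x ∘ c2) ∘ p1 = x0) by (unfold x0; assoc_r; rewrite (proj1 Hp); reflexivity).
  assert (Ez : (z ∘ c2) ∘ p1 = z0) by (unfold z0; assoc_r; rewrite (proj1 Hp); reflexivity).
  assert (Mxzz : mem3 R x0 z0 z0).
  { apply (Hmaj _ _ _ R P x0 z0 z0 (y2 ∘ p1) z0 (y1 ∘ p2)).
    - apply (Rintro _ _ (y1 ∘ p2)); [apply mem2_precomp; assumption..|apply mem2_refl, rD].
    - apply (Rintro _ _ (y2 ∘ p1)); [rewrite <- Ex | apply mem2_refl, rB | rewrite <- Ez];
        apply mem2_precomp; assumption.
    - apply (Rintro _ _ z0); apply mem2_refl; assumption. }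
  destruct (Relim _ _ _ _ Mxzz) as [S' [c [w [Rc [Axw [Bwz Dwz]]]]]].
  apply (mem2_descend _ c _ _ Rc), (mem2_composite_intro _ _ _ HA_BD _ _ w); [exact Axw|].
  apply (mem2_intersection _ _ _ HBD). auto.
Qed.

Lemma inter_comp_distributive_of_majority :
  majority_category C -> inter_comp_distributive.
Proof.
  intros Hmaj X A B D rA rB rD BD A_BD AB AD AB_AD HBD HA_BD HAB HAD HAB_AD.
  destruct (exists_product X X) as [W [p1 [p2 HW]]].
  destruct (exists_pairing_rel p1 p2 (rel_conv A) A HW) as [Q MQ].
  destruct (exists_star_rel3 (rel_conv Q) (rel_conv B) D) as [R [Rintro Relim]].
  assert (Intro : forall S (p : Hom S W) (w y z : Hom S X),
             mem2 A (p1 ∘ p) w -> mem2 A w (p2 ∘ p) -> mem2 B y w -> mem2 D w z ->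
             mem3 R p y z).
  { intros S p w y z Apw Awp Byw Dwz. apply (Rintro _ _ w); [|apply mem2_conv|]; auto.
    apply mem2_conv, MQ. split; [apply mem2_conv|]; assumption. }
  apply rle_of_mem2. intros S x z M.
  apply (mem2_intersection _ _ _ HA_BD) in M as [Axz Mbd].
  destruct (mem2_composite_elim _ _ _ HBD _ _ _ Mbd) as [S1 [c1 [y [R1 [Bxy Dyz]]]]].
  apply (mem2_descend _ c1 _ _ R1).
  pose proof (mem2_precomp _ _ _ c1 Axz) as Axz1.
  set (x1 := x ∘ c1) in *. set (z1 := z ∘ c1) in *.
  destruct (proj1 HW _ x1 z1) as [p [Px Pz]].
  destruct (proj1 HW _ y y) as [p' [P'1 P'2]].
  assert (Mpxz : mem3 R p x1 z1).
  { apply (Hmaj _ _ _ R S1 p p' x1 z1 z1 x1).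
    - apply (Intro _ _ x1); rewrite ?Px, ?Pz; auto using mem2_refl.
    - apply (Intro _ _ z1); rewrite ?Px, ?Pz; auto using mem2_refl.
    - apply (Intro _ _ y); rewrite ?P'1, ?P'2; auto using mem2_refl. }
  destruct (Relim _ _ _ _ Mpxz) as [S' [c [w [Rc [Mpw [Bxw Dwz]]]]]].
  apply mem2_conv, MQ in Mpw as [Axw Awz]. apply mem2_conv in Axw, Bxw.
  rewrite comp_assoc, Px in Axw. rewrite comp_assoc, Pz in Awz.
  apply (mem2_descend _ c _ _ Rc), (mem2_composite_intro _ _ _ HAB_AD _ _ w).
  - apply (mem2_intersection _ _ _ HAB). auto.
  - apply (mem2_intersection _ _ _ HAD). auto.
Qed.

Lemma equiv_inter_comp_distributive_of_inter_comp_distributive :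
  inter_comp_distributive -> equiv_inter_comp_distributive.
Proof.
  intros H X a b g Qa Qb Qg bg a_bg ab ag ab_ag Hbg Ha_bg Hab Hag Hab_ag. split.
  - exact (H X a b g (proj1 Qa) (proj1 Qb) (proj1 Qg) bg a_bg ab ag ab_ag
             Hbg Ha_bg Hab Hag Hab_ag).
  - exact (composite_inter_le_inter_composite a b g ab ag ab_ag bg a_bg
             (proj2 (proj2 Qa)) Hab Hag Hab_ag Hbg Ha_bg).
Qed.

End RegularCategory.

Theorem theorem3p3 (C : Cat) (HC : regular C) :
  (* (i) <-> (ii) *)
  (majority_category C <->
   forall (X : C) (A B D : Rel C X X),
     reflexive A -> reflexive B -> reflexive D ->
     forall AB AD BD AB_AD A_BD : Rel C X X,
       is_composite A B AB -> is_composite A D AD ->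
       is_intersection AB AD AB_AD ->
       is_intersection B D BD -> is_composite A BD A_BD ->
       rle AB_AD A_BD) /\
  (* (i) <-> (iii) *)
  (majority_category C <->
   forall (X : C) (A B D : Rel C X X),
     reflexive A -> reflexive B -> reflexive D ->
     forall BD A_BD AB AD AB_AD : Rel C X X,
       is_composite B D BD -> is_intersection A BD A_BD ->
       is_intersection A B AB -> is_intersection A D AD ->
       is_composite AB AD AB_AD ->
       rle A_BD AB_AD) /\
  (* (i) <-> (iv) *)
  (majority_category C <->
   forall (X : C) (a b g : Rel C X X),
     equivalence a -> equivalence b -> equivalence g ->
     forall bg a_bg ab ag ab_ag : Rel C X X,
       is_composite b g bg -> is_intersection a bg a_bg ->
       is_intersection a b ab -> is_intersection a g ag ->
       is_composite ab ag ab_ag ->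
       req a_bg ab_ag) /\
  (* (i) <-> (v) *)
  (majority_category C <->
   forall (X : C) (a b g : Rel C X X),
     equivalence a -> equivalence b -> equivalence g ->
     effective a -> effective b -> effective g ->
     forall bg a_bg ab ag ab_ag : Rel C X X,
       is_composite b g bg -> is_intersection a bg a_bg ->
       is_intersection a b ab -> is_intersection a g ag ->
       is_composite ab ag ab_ag ->
       req a_bg ab_ag).
Proof.
  change ((majority_category C <-> comp_inter_distributive C) /\
          (majority_category C <-> inter_comp_distributive C) /\
          (majority_category C <-> equiv_inter_comp_distributive C) /\
          (majority_category C <-> effective_inter_comp_distributive C)).
  assert (iv_v : equiv_inter_comp_distributive C -> effective_inter_comp_distributive C)
    by (intros H X a b g Qa Qb Qg _ _ _; apply H; assumption).
  pose proof (majority_of_effective_inter_comp_distributive C HC) as v_i.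
  pose proof (equiv_inter_comp_distributive_of_inter_comp_distributive C HC) as iii_iv.
  pose proof (inter_comp_distributive_of_majority C HC) as i_iii.
  split; [|split; [|split]]; split.
  - exact (comp_inter_distributive_of_majority C HC).
  - exact (majority_of_comp_inter_distributive C HC).
  - exact i_iii.
  - intros H. exact (v_i (iv_v (iii_iv H))).
  - intros H. exact (iii_iv (i_iii H)).
  - intros H. exact (v_i (iv_v H)).
  - intros H. exact (iv_v (iii_iv (i_iii H))).
  - exact v_i.
Qed.
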